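(* Fix integers $k\ge 1$ and $j\in\{1,\dots,2^k\}$ and a real number $\beta>0$. Let $q_j=1/(2^k-j+1)$ and let $\nu_j$ be the probability distribution on $Z=XY\in\{0,1\}^2$ given by $\nu_j(X=0,Y=0)=1-3q_j/4$ and $\nu_j(X=x,Y=y)=q_j/4$ whenever $x\neq 0$ or $y\neq 0$. Let $\mathcal{M}_j$ be the set of probability distributions $\mu$ of $(C,Z)$, with $C=AB\in\{0,1\}^2$ and $Z=XY\in\{0,1\}^2$, of the form $\mu(C=c,Z=z)=\nu_j(Z=z)\,\mu(C=c\mid Z=z)$ where the conditional distribution $\mu(C\mid Z)$ belongs to $\mathcal{T}$. If $F_j:\{0,1\}^2\times\{0,1\}^2\to[0,\infty)$ is a PEF with power $\beta$ for $\mathcal{M}_j$, then the function $(c,z)\mapsto 4\,\nu_j(Z=z)\,F_j(cz)$ is a PEF with power $\beta$ for $\mathcal{M}_{2^k}$ (the model obtained for $j=2^k$, in which the input distribution is uniform).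
   Context: $\mathcal{T}$ denotes the set of conditional distributions $\mu(C\mid Z)$ of outcomes $C=AB\in\{0,1\}^2$ given settings $Z=XY\in\{0,1\}^2$ that (i) satisfy the non-signaling conditions: $\sum_b\mu(ab\mid xy)$ does not depend on $y$ and $\sum_a\mu(ab\mid xy)$ does not depend on $x$; and (ii) satisfy Tsirelson's bounds: with correlators $E_{xy}=\sum_{a,b}(-1)^{a+b}\mu(ab\mid xy)$, one has $|E_{00}+E_{01}+E_{10}+E_{11}-2E_{x'y'}|\le 2\sqrt2$ for every $x'y'\in\{0,1\}^2$. For a set $\mathcal{M}$ of distributions of $(C,Z)$ and $\beta>0$, a probability estimation factor (PEF) with power $\beta$ for $\mathcal{M}$ is a non-negative function $F$ of $(c,z)$ such that $\sum_{c,z}\mu(C=c,Z=z)\,F(cz)\,\mu(C=c\mid Z=z)^{\beta}\le 1$ for every $\mu\in\mathcal{M}$. *)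

From mathcomp Require Import all_boot all_order all_algebra.
From mathcomp Require Import all_classical all_reals.
From mathcomp Require Import exp.
Set Implicit Arguments. Unset Strict Implicit. Unset Printing Implicit Defensive.
Import Order.TTheory GRing.Theory Num.Theory.
Local Open Scope ring_scope.

(* Outcomes C = AB and settings Z = XY, each in {0,1}^2 (bits as bool). *)
Definition bits2 := (bool * bool)%type.

(* A conditional distribution mu(C|Z): [cmu c z] = mu(C = c | Z = z). *)
(* A joint distribution of (C,Z): [p c z] = mu(C = c, Z = z). *)

Section Defs.
Variable R : realType.

Definition is_cond_distr (mu : bits2 -> bits2 -> R) : Prop :=
  (forall c z, 0 <= mu c z) /\ (forall z, \sum_(c : bits2) mu c z = 1).

Definition non_signaling (mu : bits2 -> bits2 -> R) : Prop :=
  (forall a x, \sum_(b : bool) mu (a, b) (x, false) = \sum_(b : bool) mu (a, b) (x, true)) /\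
  (forall b y, \sum_(a : bool) mu (a, b) (false, y) = \sum_(a : bool) mu (a, b) (true, y)).

Definition correlator (mu : bits2 -> bits2 -> R) (z : bits2) : R :=
  \sum_(c : bits2) (-1) ^+ (nat_of_bool c.1 + nat_of_bool c.2)%N * mu c z.

Definition tsirelson (mu : bits2 -> bits2 -> R) : Prop :=
  forall z' : bits2,
    `| correlator mu (false, false) + correlator mu (false, true)
       + correlator mu (true, false) + correlator mu (true, true)
       - 2 * correlator mu z' | <= 2 * Num.sqrt 2.

Definition in_T (mu : bits2 -> bits2 -> R) : Prop :=
  is_cond_distr mu /\ non_signaling mu /\ tsirelson mu.

Definition marginalZ (p : bits2 -> bits2 -> R) (z : bits2) : R :=
  \sum_(c : bits2) p c z.

Definition condCZ (p : bits2 -> bits2 -> R) (c z : bits2) : R :=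
  p c z / marginalZ p z.

Definition is_PEF (beta : R) (M : (bits2 -> bits2 -> R) -> Prop)
    (F : bits2 -> bits2 -> R) : Prop :=
  (forall c z, 0 <= F c z) /\
  (forall p, M p ->
     \sum_(c : bits2) \sum_(z : bits2) p c z * F c z * (condCZ p c z) `^ beta <= 1).

Definition qj (k j : nat) : R := 1 / ((2 ^ k)%:R - j%:R + 1).

Definition nuj (k j : nat) (z : bits2) : R :=
  if z == (false, false) then 1 - 3 * qj k j / 4 else qj k j / 4.

Definition model (k j : nat) (p : bits2 -> bits2 -> R) : Prop :=
  exists mu, in_T mu /\ forall c z, p c z = nuj k j z * mu c z.

End Defs.

(* Conditioned on Z = z, every distribution of the model M_nu built from T and
   an input distribution nu is the same conditional distribution mu, so the
   summand of the PEF inequality at (c, z) is nu(z) mu(c|z) F(cz) mu(c|z)^beta.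
   Replacing nu by another input distribution nu' > 0 and F by (nu / nu') F
   therefore leaves every summand unchanged; for nu' = nu_(2^k) = 1/4 this
   rescaling is the factor 4 nu_j. *)
From mathcomp Require Import all_boot all_order all_algebra.
From mathcomp Require Import all_classical all_reals.
From mathcomp Require Import exp.
From mathcomp Require Import lra.
Import Order.TTheory GRing.Theory Num.Theory.
Local Open Scope ring_scope.

Section InputDistribution.
Variable R : realType.

Definition joint (nu : bits2 -> R) (mu : bits2 -> bits2 -> R) (c z : bits2) : R :=
  nu z * mu c z.

Definition input_model (S : (bits2 -> bits2 -> R) -> Prop) (nu : bits2 -> R)
    (p : bits2 -> bits2 -> R) : Prop :=
  exists mu, S mu /\ forall c z, p c z = joint nu mu c z.

Lemma marginalZ_joint nu mu z :
  is_cond_distr mu -> marginalZ (joint nu mu) z = nu z.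
Proof. by move=> [_ mu1]; rewrite /marginalZ /joint -mulr_sumr mu1 mulr1. Qed.

Lemma condCZ_joint nu mu c z :
  is_cond_distr mu -> nu z != 0 -> condCZ (joint nu mu) c z = mu c z.
Proof.
move=> mu_cond nuz0.
by rewrite /condCZ marginalZ_joint // /joint mulrC mulKf.
Qed.

Lemma joint_PEF_summand nu mu (G beta : R) c z : is_cond_distr mu ->
  joint nu mu c z * G * (condCZ (joint nu mu) c z) `^ beta
  = joint nu mu c z * G * (mu c z) `^ beta.
Proof.
move=> mu_cond; have [nuz0|nuz0] := eqVneq (nu z) 0.
  by rewrite /joint nuz0 !mul0r.
by rewrite condCZ_joint.
Qed.

Lemma PEF_change_input (S : (bits2 -> bits2 -> R) -> Prop) (nu nu' : bits2 -> R)
    (beta : R) (F : bits2 -> bits2 -> R) :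
  (forall mu, S mu -> is_cond_distr mu) ->
  (forall z, 0 <= nu z) -> (forall z, 0 < nu' z) ->
  is_PEF beta (input_model S nu) F ->
  is_PEF beta (input_model S nu') (fun c z => nu z / nu' z * F c z).
Proof.
move=> S_cond nu_ge0 nu'_gt0 [F_ge0 F_PEF]; split=> [c z|p [mu [Smu p_joint]]].
  by rewrite !mulr_ge0 ?invr_ge0 ?nu_ge0 ?F_ge0 ?(ltW (nu'_gt0 z)).
have mu_cond := S_cond _ Smu.
have -> : p = joint nu' mu by apply: funext=> c; apply: funext=> z; exact: p_joint.
have q_model : input_model S nu (joint nu mu) by exists mu.
apply: le_trans (F_PEF _ q_model); rewrite le_eqVlt; apply/orP; left; apply/eqP.
apply: eq_bigr=> c _; apply: eq_bigr=> z _.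
rewrite !joint_PEF_summand // /joint.
by rewrite mulrCA !mulrA divfK ?gt_eqF.
Qed.

End InputDistribution.

Lemma qj_gt0 (R : realType) (k j : nat) : (j <= 2 ^ k)%N -> 0 < @qj R k j.
Proof.
move=> le_j; rewrite /qj -natrB // divr_gt0 //.
by rewrite ltr_pwDr ?ler0n.
Qed.

Lemma qj_le1 (R : realType) (k j : nat) : (j <= 2 ^ k)%N -> @qj R k j <= 1.
Proof.
move=> le_j; rewrite /qj -natrB // ler_pdivrMr ?ltr_pwDr ?ler0n // mul1r.
by rewrite lerDr ler0n.
Qed.

Lemma nuj_ge0 (R : realType) (k j : nat) z : (j <= 2 ^ k)%N -> 0 <= @nuj R k j z.
Proof.
move=> le_j; have q_gt0 := @qj_gt0 R k j le_j; have q_le1 := @qj_le1 R k j le_j.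
rewrite /nuj; case: ifP => _; lra.
Qed.

Lemma nuj_uniform (R : realType) (k : nat) z : @nuj R k (2 ^ k) z = 4^-1.
Proof.
rewrite /nuj.
have -> : @qj R k (2 ^ k) = 1 by rewrite /qj subrr add0r divr1.
case: ifP => _; lra.
Qed.

Theorem proposition1 (R : realType) (k j : nat) (beta : R)
  (hk : (1 <= k)%N) (hj1 : (1 <= j)%N) (hj2 : (j <= 2 ^ k)%N) (hbeta : 0 < beta)
  (F : bits2 -> bits2 -> R) :
  is_PEF beta (@model R k j) F ->
  is_PEF beta (@model R k (2 ^ k)) (fun c z => 4 * @nuj R k j z * F c z).
Proof.
move=> F_PEF.
have -> : (fun c z => 4 * nuj R k j z * F c z)
          = (fun c z => nuj R k j z / nuj R k (2 ^ k) z * F c z).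
  by apply: funext=> c; apply: funext=> z; rewrite nuj_uniform invrK (mulrC 4).
apply: (@PEF_change_input R (@in_T R) (nuj R k j) (nuj R k (2 ^ k))).
- by move=> mu [].
- by move=> z; exact: nuj_ge0.
- by move=> z; rewrite nuj_uniform invr_gt0.
- exact: F_PEF.
Qed.
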